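(* Let $F$ be an infinite field (e.g. $\mathbb{R}$ or $\mathbb{C}$), let $V$ be a vector space over $F$, and let $n \ge 1$. Every valid widget with $n$ pairs in $V$ contains a legal subwidget.
   Context: A widget with $n$ pairs in $V$ is an indexed family of $n$ pairs of vectors $p_i=(p_i^+,p_i^-)$, $i=1,\dots,n$, in $V$ (the vectors $p_i^+,p_i^-$ are called the points of the pair $p_i$; each is called the opposite of the other). A section of a widget is a set of points containing at most one point from each pair. A widget with $n$ pairs is legal if every section spans a linear subspace of $V$ of dimension at most $n-1$. A widget with $n$ pairs is full if the linear span of all its $2n$ points has dimension at least $n$. A widget is valid if it is both legal and full. A subwidget of a widget with $n$ pairs is the widget formed by some $k$ of its pairs with $1\le k<n$ (a proper subset of the pairs); it is itself a widget with $k$ pairs, so it is legal if every one of its sections spans a subspace of dimension at most $k-1$, and full if its $2k$ points span a subspace of dimension at least $k$. *)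

From HB Require Import structures.
From mathcomp Require Import all_boot all_order all_algebra.
Set Implicit Arguments. Unset Strict Implicit. Unset Printing Implicit Defensive.
Import GRing.Theory.
Local Open Scope ring_scope.

Definition infinite_field (F : fieldType) : Prop :=
  forall s : seq F, exists x : F, x \notin s.

Section Widgets.
Variables (F : fieldType) (V : lmodType F).

Definition in_span (s : seq V) (v : V) : Prop :=
  exists c : 'I_(size s) -> F, v = \sum_(i < size s) c i *: s`_i.

Definition lin_indep (t : seq V) : Prop :=
  forall c : 'I_(size t) -> F,
    \sum_(i < size t) c i *: t`_i = 0 -> forall i, c i = 0.

Definition span_dim_le (s : seq V) (d : nat) : Prop :=
  forall t : seq V, (forall v, v \in t -> in_span s v) -> lin_indep t ->
    (size t <= d)%N.

Definition span_dim_ge (s : seq V) (d : nat) : Prop :=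
  exists t : seq V, [/\ forall v, v \in t -> in_span s v, lin_indep t
                      & (d <= size t)%N].

Variable n : nat.

Definition widget := 'I_n -> V * V.

(* A section is given by choosing, for each pair i, either no point (None),
   p_i^+ (Some true) or p_i^- (Some false). *)
Definition section_pts (p : widget) (s : 'I_n -> option bool) : seq V :=
  pmap (fun i => omap (fun b : bool => if b then (p i).1 else (p i).2) (s i))
       (enum 'I_n).

Definition all_pts (p : widget) : seq V :=
  flatten [seq [:: (p i).1; (p i).2] | i <- enum 'I_n].

Definition legal_on (p : widget) (K : {set 'I_n}) : Prop :=
  forall s : 'I_n -> option bool, (forall i, i \notin K -> s i = None) ->
    span_dim_le (section_pts p s) (#|K| - 1).

Definition legal (p : widget) : Prop :=
  forall s : 'I_n -> option bool, span_dim_le (section_pts p s) (n - 1).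

Definition full (p : widget) : Prop := span_dim_ge (all_pts p) n.

Definition valid (p : widget) : Prop := legal p /\ full p.

Definition has_legal_subwidget (p : widget) : Prop :=
  exists K : {set 'I_n}, [/\ (0 < #|K|)%N, (#|K| < n)%N & legal_on p K].

End Widgets.

(* Suppose no proper nonempty set K of pairs forms a legal subwidget.  Then
   some section of K has |K| independent points, so the points of the pairs
   in K span at least |K| dimensions; for the set of all pairs this is
   fullness.  This is exactly the hypothesis of Rado's theorem on independent
   transversals, here for a linear matroid and relative to a subspace U so
   that the usual induction goes through: split along a tight subfamily if
   there is one, and otherwise take any point of a pair outside U.  Rado's
   theorem gives a section with one point from every pair whose n points are
   independent, contradicting legality.

   As V may be infinite-dimensional, the 2n points are pulled back to the
   unit vectors of F^(2n): the dimension of a span in V becomes the rank of a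
   row space modulo the kernel Z of the coordinate map. *)

From HB Require Import structures.
From mathcomp Require Import all_boot all_order all_algebra zify.
From Stdlib Require Import Classical.
Set Implicit Arguments. Unset Strict Implicit. Unset Printing Implicit Defensive.
Import GRing.Theory.
Local Open Scope ring_scope.

Section RowSpaces.
Variables (F : fieldType) (N : nat).

Lemma rank_ltn_adds m1 m2 (A : 'M[F]_(m1, N)) (B : 'M_(m2, N)) :
  ~~ (B <= A)%MS -> (\rank A < \rank (A + B)%MS)%N.
Proof. by move=> nBA; apply: rank_ltmx; rewrite ltmxE addsmxSl addsmx_sub submx_refl. Qed.

Lemma kernel_rowspace (V : lmodType F) (f : {linear 'rV[F]_N -> V}) :
  exists Z : 'M[F]_N, forall c, (c <= Z)%MS <-> f c = 0.
Proof.
have saturated (Z : 'M[F]_N) : (forall c, (c <= Z)%MS -> f c = 0) ->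
    ~ (exists c, f c = 0 /\ ~~ (c <= Z)%MS) ->
    exists Z' : 'M[F]_N, forall c, (c <= Z')%MS <-> f c = 0.
  move=> kerZ maxZ; exists Z => c; split=> [|fc0]; first exact: kerZ.
  by apply: NNPP => /negP ncZ; apply: maxZ; exists c.
suff grow d (Z : 'M[F]_N) : (N - \rank Z <= d)%N ->
    (forall c, (c <= Z)%MS -> f c = 0) -> exists Z' : 'M[F]_N, forall c, (c <= Z')%MS <-> f c = 0.
  apply: (grow N 0) => [|c]; first exact: leq_subr.
  by rewrite submx0 => /eqP ->; rewrite linear0.
elim: d Z => [|d IHd] Z rZ kerZ;
  have [[c [fc0 ncZ]]|] := classic (exists c, f c = 0 /\ ~~ (c <= Z)%MS);
  try exact: saturated.
  by move: (rank_ltn_adds ncZ) (rank_leq_col (Z + c)%MS) rZ; rewrite leqn0 subn_eq0; lia.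
apply: (IHd (Z + c)%MS); first by move: (rank_ltn_adds ncZ) rZ; lia.
move=> v /sub_addsmxP [[u1 u2] /= ->].
rewrite linearD /= kerZ ?submxMl // add0r.
by rewrite [u2]mx11_scalar mul_scalar_mx linearZ /= fc0 scaler0.
Qed.
End RowSpaces.

Section Rado.
Variables (F : fieldType) (N : nat) (I T : finType) (t0 : T) (x : I -> T -> 'rV[F]_N).
Implicit Types (U : 'M[F]_N) (K L S : {set I}) (g : I -> T).

Definition span_set K : 'M[F]_N := (\sum_(i in K) \sum_t <<x i t>>)%MS.

Definition span_choice K g : 'M[F]_N := (\sum_(i in K) <<x i (g i)>>)%MS.

Definition rado_cond U S :=
  forall K, K \subset S -> (\rank U + #|K| <= \rank (U + span_set K))%N.

Lemma span_choice_sub_set K g : (span_choice K g <= span_set K)%MS.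
Proof.
apply/sumsmx_subP => i iK; apply: (sumsmx_sup i) => //.
exact: (sumsmx_sup (g i)).
Qed.

Lemma span_setU K L : (span_set (K :|: L) <= span_set K + span_set L)%MS.
Proof.
apply/sumsmx_subP => i /setUP [iK|iL].
  by apply: submx_trans (addsmxSl _ _); apply: (sumsmx_sup i).
by apply: submx_trans (addsmxSr _ _); apply: (sumsmx_sup i).
Qed.

Lemma span_choiceID S K g :
  K \subset S -> span_choice S g = (span_choice K g + span_choice (S :\: K) g)%MS.
Proof. by move=> sKS; rewrite /span_choice (big_setID K) (setIidPr sKS). Qed.

Lemma eq_span_choice K g h : {in K, g =1 h} -> span_choice K g = span_choice K h.
Proof. by move=> eq_gh; apply: eq_bigr => i /eq_gh ->. Qed.

Lemma rank_adds_row U (v : 'rV[F]_N) : (\rank (U + <<v>>)%MS <= \rank U + 1)%N.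
Proof.
by apply: leq_trans (mxrank_adds_leqif _ _) _; rewrite leq_add2l genmxE rank_leq_row.
Qed.

Section RadoStep.
Variables (S : {set I}) (U : 'M[F]_N).
Hypothesis IH : forall U' S', (#|S'| < #|S|)%N -> rado_cond U' S' ->
  exists g, (\rank U' + #|S'| <= \rank (U' + span_choice S' g))%N.
Hypothesis radoS : rado_cond U S.

Lemma rado_tight K : K \proper S -> K != set0 ->
    (\rank (U + span_set K) <= \rank U + #|K|)%N ->
  exists g, (\rank U + #|S| <= \rank (U + span_choice S g))%N.
Proof.
move=> ltKS nzK tightK; have sKS := proper_sub ltKS.
have [f1 rank_f1] : exists g, (\rank U + #|K| <= \rank (U + span_choice K g))%N.
  by apply: IH (proper_card ltKS) _ => L sLK; apply/radoS/(subset_trans sLK).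
set U' := (U + span_set K)%MS.
have rankU' : \rank U' = (\rank U + #|K|)%N.
  by apply/eqP; rewrite eqn_leq tightK radoS.
have sU'f1 : (U' <= U + span_choice K f1)%MS.
  have sf1U' : (U + span_choice K f1 <= U')%MS by rewrite addsmxS ?span_choice_sub_set.
  by rewrite -(mxrank_leqif_sup sf1U') eqn_leq mxrankS // rankU'.
have [f2 rank_f2] : exists g,
    (\rank U' + #|S :\: K| <= \rank (U' + span_choice (S :\: K) g))%N.
  apply: IH => [|L sLSK].
    by rewrite cardsDS // -subn_gt0 subKn ?subset_leq_card // card_gt0.
  have disjKL : [disjoint K & L].
    by rewrite disjoint_sym; move: sLSK; rewrite subsetD => /andP [].
  have sKLS : K :|: L \subset S by rewrite subUset sKS (subset_trans sLSK (subsetDl _ _)).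
  have := radoS sKLS; rewrite cardsU (disjoint_setI0 disjKL) cards0 subn0 addnA -rankU' => h.
  by apply: leq_trans h (mxrankS _); rewrite /U' -addsmxA addsmxS ?span_setU.
exists (fun i => if i \in K then f1 i else f2 i).
rewrite (span_choiceID _ sKS) (eq_span_choice (h := f1)) => [|i -> //].
rewrite (eq_span_choice (K := S :\: K) (h := f2)) => [|i /setDP [_ /negbTE -> //]].
rewrite -(setIidPr sKS) -(cardsID K S) (setIidPr sKS) addnA -rankU'.
by apply: leq_trans rank_f2 (mxrankS _); rewrite addsmxA addsmxS.
Qed.

Lemma rado_loose : (forall K, K \proper S -> K != set0 ->
    (\rank U + #|K| < \rank (U + span_set K))%N) ->
  exists g, (\rank U + #|S| <= \rank (U + span_choice S g))%N.
Proof.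
move=> looseS; have [->|[j jS]] := set_0Vmem S.
  by exists (fun=> t0); rewrite cards0 addn0 mxrankS // addsmxSl.
have [t ntU] : exists t, ~~ (x j t <= U)%MS.
  case: (pickP (fun t => ~~ (x j t <= U)%MS)) => [t ntU|xjU]; first by exists t.
  have sjS : [set j] \subset S by rewrite sub1set.
  have := radoS sjS; rewrite cards1 addn1 ltnNge => /negP [].
  rewrite mxrankS // addsmx_sub submx_refl /span_set big_set1.
  by apply/sumsmx_subP => t _; rewrite genmxE; apply: negbFE (xjU t).
set U' := (U + <<x j t>>)%MS.
have rankU' : \rank U' = (\rank U + 1)%N.
  apply/eqP; rewrite eqn_leq rank_adds_row addn1.
  by apply: rank_ltn_adds; rewrite genmxE.
have [f2 rank_f2] : exists g,
    (\rank U' + #|S :\ j| <= \rank (U' + span_choice (S :\ j) g))%N.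
  apply: IH => [|L sLSj]; first by rewrite (cardsD1 j S) jS.
  have [->|nzL] := eqVneq L set0; first by rewrite cards0 addn0 mxrankS ?addsmxSl.
  have ltLS : L \proper S.
    rewrite properEneq (subset_trans sLSj (subsetDl _ _)) andbT.
    by apply: contraTneq jS => <-; apply/negP => /(subsetP sLSj); rewrite setD11.
  rewrite rankU' addnAC addn1; apply: leq_trans (looseS L ltLS nzL) _.
  by rewrite mxrankS // addsmxS ?addsmxSl.
exists (fun i => if i == j then t else f2 i).
have sjS : [set j] \subset S by rewrite sub1set.
rewrite (span_choiceID _ sjS) (eq_span_choice (K := S :\ j) (h := f2)).
  rewrite /span_choice big_set1 eqxx (cardsD1 j S) jS addnA -rankU'.
  by apply: leq_trans rank_f2 (mxrankS _); rewrite addsmxA.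
by move=> i /setD1P [/negbTE ->].
Qed.
End RadoStep.

Lemma rado_transversal U S : rado_cond U S ->
  exists g, (\rank U + #|S| <= \rank (U + span_choice S g))%N.
Proof.
elim: {S}_.+1 {-2}S (ltnSn #|S|) U => // m IHm S leSm U radoS.
have IH U' S' : (#|S'| < #|S|)%N -> rado_cond U' S' ->
    exists g, (\rank U' + #|S'| <= \rank (U' + span_choice S' g))%N.
  by move=> ltS'S; apply: IHm; apply: leq_trans ltS'S leSm.
have [/existsP [K /and3P [ltKS nzK tightK]]|/existsPn looseS] := boolP [exists K : {set I},
  [&& K \proper S, K != set0 & \rank (U + span_set K) <= \rank U + #|K|]]%N.
  exact: rado_tight IH radoS K ltKS nzK tightK.
apply: rado_loose IH radoS _ => K ltKS nzK.
by have := looseS K; rewrite ltKS nzK ltnNge.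
Qed.
End Rado.

Section Spans.
Variables (F : fieldType) (V : lmodType F).

Lemma in_span_self (s : seq V) v : v \in s -> in_span s v.
Proof.
move=> sv; have ks : (index v s < size s)%N by rewrite index_mem.
exists (fun i => (i == Ordinal ks)%:R); rewrite (bigD1 (Ordinal ks)) //= eqxx scale1r.
by rewrite big1 ?addr0 ?nth_index // => i /negbTE ->; rewrite scale0r.
Qed.

Lemma not_span_dim_le (s : seq V) d : ~ span_dim_le s d -> span_dim_ge s d.+1.
Proof.
move=> not_le; apply: NNPP => not_ge; apply: not_le => t ts indep_t.
by rewrite leqNgt; apply/negP => lt_d_t; apply: not_ge; exists t.
Qed.

End Spans.

Section Coordinates.
Variables (F : fieldType) (V : lmodType F) (N : nat) (w : 'I_N -> V).

Definition lincomb (c : 'rV[F]_N) : V := \sum_k c 0 k *: w k.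

Fact lincomb_is_linear : linear lincomb.
Proof.
move=> a u v; rewrite /lincomb scaler_sumr -big_split; apply: eq_bigr => k _.
by rewrite !mxE scalerDl scalerA.
Qed.

HB.instance Definition _ :=
  GRing.isLinear.Build F 'rV[F]_N V *:%R lincomb lincomb_is_linear.

Lemma lincomb_delta k : lincomb (delta_mx 0 k) = w k.
Proof.
rewrite /lincomb (bigD1 k) //= big1 ?addr0 => [|j /negbTE njk].
  by rewrite mxE !eqxx scale1r.
by rewrite mxE njk andbF scale0r.
Qed.

Lemma lincomb_mul m (a : 'rV_m) (Y : 'M_(m, N)) :
  lincomb (a *m Y) = \sum_i a 0 i *: lincomb (row i Y).
Proof. by rewrite mulmx_sum_row linear_sum; apply: eq_bigr => i _; rewrite linearZ. Qed.

Lemma lincomb_preimages (s : seq V) m (M : 'M[F]_(m, N)) :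
    (forall u, u \in s -> exists2 c, (c <= M)%MS & lincomb c = u) ->
  exists2 d : 'I_(size s) -> 'rV_N,
    forall i, (d i <= M)%MS & forall i, lincomb (d i) = s`_i.
Proof.
move=> sM; apply: (@fin_all_exists2 'I_(size s) (fun=> 'rV_N)
  (fun _ c => (c <= M)%MS) (fun i c => lincomb c = s`_i)) => i.
exact/sM/mem_nth.
Qed.

Variables (Z : 'M[F]_N) (kerZ : forall c, (c <= Z)%MS <-> lincomb c = 0).

Lemma rank_adds_kerP m (Y : 'M[F]_(m, N)) :
  (\rank Z + m <= \rank (Z + Y))%N <-> (forall a, lincomb (a *m Y) = 0 -> a = 0).
Proof.
have rankY := rank_leq_row Y; have sum_cap := mxrank_sum_cap Z Y.
split=> [rankZY a aY0|injY].
  have aYZ : (a *m Y <= Z)%MS by apply/kerZ.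
  have /rowV0P capZY : (Z :&: Y)%MS == 0 by rewrite -mxrank_eq0; apply/eqP; lia.
  have /row_free_inj freeY : row_free Y.
    by rewrite /row_free eqn_leq; apply/andP; split; lia.
  by apply/freeY; rewrite mul0mx; apply: capZY; rewrite sub_capmx aYZ submxMl.
have freeY : row_free Y.
  by apply: inj_row_free => a aY0; apply: injY; rewrite aY0 linear0.
have capZY : \rank (Z :&: Y)%MS = 0%N.
  apply/eqP; rewrite mxrank_eq0; apply/rowV0P => v.
  rewrite sub_capmx => /andP [vZ /submxP [a va]].
  by move: vZ; rewrite va => /kerZ /injY ->; rewrite mul0mx.
by move: freeY; rewrite /row_free => /eqP; lia.
Qed.

Lemma rank_adds_lin_indep (t : seq V) m (M : 'M[F]_(m, N)) :
    (forall v, v \in t -> exists2 c, (c <= M)%MS & lincomb c = v) -> lin_indep t ->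
  (\rank Z + size t <= \rank (Z + M))%N.
Proof.
move=> tM indep_t.
have [d dM d_t] := lincomb_preimages tM.
pose Y := \matrix_i d i.
have /rank_adds_kerP rankZY : forall a, lincomb (a *m Y) = 0 -> a = 0.
  move=> a; rewrite lincomb_mul => ta0; apply/rowP => i; rewrite mxE.
  apply: (indep_t (fun j => a 0 j)); apply: etrans ta0; apply: eq_bigr => j _.
  by rewrite rowK d_t.
apply: leq_trans rankZY (mxrankS _); rewrite addsmxS //.
by apply/row_subP => i; rewrite rowK.
Qed.

Lemma lin_indep_rows m (v : 'I_m -> 'rV[F]_N) :
  (\rank Z + m <= \rank (Z + \matrix_i v i))%N ->
  lin_indep [seq lincomb (v i) | i <- enum 'I_m].
Proof.
move=> /rank_adds_kerP injY; rewrite /lin_indep size_map size_enum_ord => c c0 i.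
suff /rowP /(_ i) : \row_j c j = 0 by rewrite !mxE.
apply: injY; rewrite lincomb_mul; apply: etrans c0; apply: eq_bigr => j _.
by rewrite rowK mxE (nth_map j) ?size_enum_ord // nth_ord_enum.
Qed.

Lemma in_span_lincomb (s : seq V) m (M : 'M[F]_(m, N)) :
    (forall u, u \in s -> exists2 c, (c <= M)%MS & lincomb c = u) ->
  forall v, in_span s v -> exists2 c, (c <= M)%MS & lincomb c = v.
Proof.
move=> sM v [a ->].
have [d dM d_t] := lincomb_preimages sM.
exists (\sum_i a i *: d i).
  by apply: summx_sub => i _; exact: scalemx_sub.
by rewrite linear_sum; apply: eq_bigr => i _; rewrite linearZ /= d_t.
Qed.

Lemma rank_adds_span_dim_ge (s : seq V) m (M : 'M[F]_(m, N)) d :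
    (forall u, u \in s -> exists2 c, (c <= M)%MS & lincomb c = u) -> span_dim_ge s d ->
  (\rank Z + d <= \rank (Z + M))%N.
Proof.
move=> sM [t [ts indep_t le_d_t]]; apply: leq_trans (rank_adds_lin_indep _ indep_t).
  by rewrite leq_add2l.
by move=> v /ts; apply: in_span_lincomb.
Qed.

End Coordinates.

Section WidgetCoordinates.
Variables (F : fieldType) (V : lmodType F) (n : nat) (p : widget V n).

Local Notation N := (n + n)%N.

Definition point i (b : bool) : V := if b then (p i).1 else (p i).2.

Definition coord_point (k : 'I_N) : V :=
  match split k with inl i => point i true | inr i => point i false end.

Definition point_vec i b : 'rV[F]_N :=
  delta_mx 0 (unsplit (if b then inl i else inr i)).

Lemma lincomb_point_vec i b : lincomb coord_point (point_vec i b) = point i b.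
Proof. by rewrite lincomb_delta /coord_point unsplitK; case: b. Qed.

Lemma point_vec_sub_span_set (K : {set 'I_n}) i b :
  i \in K -> (point_vec i b <= span_set point_vec K)%MS.
Proof.
by move=> iK; apply: (sumsmx_sup i) => //; apply: (sumsmx_sup b) => //; rewrite genmxE.
Qed.

Lemma section_pts_lincomb (K : {set 'I_n}) s : (forall i, i \notin K -> s i = None) ->
  forall u, u \in section_pts p s ->
  exists2 c, (c <= span_set point_vec K)%MS & lincomb coord_point c = u.
Proof.
move=> sK u; rewrite mem_pmap => /mapP [i _]; case si: (s i) => [b|] //= [->].
have iK : i \in K by apply: contraT => /sK; rewrite si.
by exists (point_vec i b); rewrite ?point_vec_sub_span_set ?lincomb_point_vec.
Qed.

Lemma all_pts_lincomb u : u \in all_pts p ->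
  exists2 c, (c <= span_set point_vec setT)%MS & lincomb coord_point c = u.
Proof.
move=> /flattenP [_ /mapP [i _ ->]]; rewrite !inE => /orP [] /eqP ->.
  by exists (point_vec i true); rewrite ?point_vec_sub_span_set ?inE ?lincomb_point_vec.
by exists (point_vec i false); rewrite ?point_vec_sub_span_set ?inE ?lincomb_point_vec.
Qed.

Lemma section_pts_transversal g : section_pts p (fun i => Some (g i)) =
  [seq lincomb coord_point (point_vec i (g i)) | i <- enum 'I_n].
Proof.
by rewrite /section_pts; elim: (enum 'I_n) => //= i r ->; rewrite lincomb_point_vec.
Qed.

Variables (Z : 'M[F]_N) (kerZ : forall c, (c <= Z)%MS <-> lincomb coord_point c = 0).

Lemma rank_adds_not_legal_on (K : {set 'I_n}) : ~ legal_on p K ->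
  (\rank Z + #|K| <= \rank (Z + span_set point_vec K))%N.
Proof.
move=> not_legal; have [s sK] : exists2 s, (forall i, i \notin K -> s i = None) &
    ~ span_dim_le (section_pts p s) (#|K| - 1).
  by apply: NNPP => no_s; apply: not_legal => s sK; apply: NNPP => ?; apply: no_s; exists s.
move=> /not_span_dim_le /(rank_adds_span_dim_ge kerZ (section_pts_lincomb sK)).
by apply: leq_trans; rewrite leq_add2l -add1n -leq_subLR.
Qed.

Lemma rank_adds_full : full p -> (\rank Z + n <= \rank (Z + span_set point_vec setT))%N.
Proof. exact: (rank_adds_span_dim_ge kerZ all_pts_lincomb). Qed.

Lemma lin_indep_transversal g :
    (\rank Z + n <= \rank (Z + span_choice point_vec setT g))%N ->
  lin_indep (section_pts p (fun i => Some (g i))).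
Proof.
move=> rank_g; rewrite section_pts_transversal.
apply: (lin_indep_rows kerZ (v := fun i => point_vec i (g i))).
apply: leq_trans rank_g (mxrankS (addsmxS _ _)) => //.
by apply/sumsmx_subP => i _; rewrite genmxE -(rowK (fun i => point_vec i (g i))) row_sub.
Qed.

End WidgetCoordinates.

Theorem theorem1 (F : fieldType) (V : lmodType F) (n : nat)
  (hF : infinite_field F) (hn : (1 <= n)%N) (p : widget V n) :
  valid p -> has_legal_subwidget p.
Proof.
move=> [legal_p full_p]; apply: NNPP => no_legal_sub.
have [Z kerZ] := kernel_rowspace (lincomb (coord_point p)).
have rado : rado_cond (@point_vec F n) Z setT.
  move=> K _; have [->|nzK] := eqVneq K set0.
    by rewrite cards0 addn0 mxrankS ?addsmxSl.
  have [->|neKT] := eqVneq K setT.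
    by rewrite cardsT card_ord; exact: (rank_adds_full kerZ full_p).
  apply: (rank_adds_not_legal_on kerZ) => legal_K; apply: no_legal_sub.
  exists K; split => //; first by rewrite card_gt0.
  have /proper_card : K \proper setT by rewrite properT.
  by rewrite cardsT card_ord.
have [g] := rado_transversal false rado; rewrite cardsT card_ord => rank_g.
have indep_g := lin_indep_transversal kerZ rank_g.
have := legal_p (fun i => Some (g i)) _ (@in_span_self _ _ _) indep_g.
by rewrite section_pts_transversal size_map size_enum_ord subn1 leqNgt ltn_predL hn.
Qed.
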